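(* Consider a $K$-user random multiple access system over a known discrete memoryless channel $P_{Y|\mathbf X}$ in which the receiver is only interested in the message of a fixed user $k$, with operation region $\mathcal R$ (a set of rate vectors). Let $\sigma=\{\mathcal R_{\mathcal D}\}$ be any partition of $\mathcal R$ indexed by the user subsets $\mathcal D\subseteq\{1,\dots,K\}$ with $k\in\mathcal D$, i.e. $\mathcal R=\bigcup_{\mathcal D\ni k}\mathcal R_{\mathcal D}$ and $\mathcal R_{\mathcal D}\cap\mathcal R_{\mathcal D'}=\emptyset$ for $\mathcal D\ne\mathcal D'$. For any choice of $(\mathcal D,\mathcal R_{\mathcal D})$-decoders ($\mathcal D\ni k$), the single-user decoder built from them has system error probability $$P_{es}\le\sum_{\mathcal D\subseteq\{1,\dots,K\},\ k\in\mathcal D}P_{es}(\mathcal D,\mathcal R_{\mathcal D}).$$ Consequently, there is a single-user decoder with $$P_{es}\le\min_{\sigma}\sum_{\mathcal D\subseteq\{1,\dots,K\},\ k\in\mathcal D}\beta(\mathcal D,\mathcal R_{\mathcal D}),$$ where the minimum is over all such partitions $\sigma$ and $\beta(\mathcal D,\mathcal R_{\mathcal D})$ is the upper bound on $P_{es}(\mathcal D,\mathcal R_{\mathcal D})$ given in the context.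
   Context: Model. There are $K$ users and one receiver; $\mathcal X$ and $\mathcal Y$ are finite input and output alphabets. The channel is a known conditional pmf $P_{Y|\mathbf X}(y\mid x_1,\dots,x_K)$, used memorylessly over $N$ symbols. Each user $j$ has a finite rate set $\mathcal A_j$ of positive reals (nats per symbol); a rate vector is $\mathbf r=(r_1,\dots,r_K)\in\mathcal A_1\times\dots\times\mathcal A_K$. $P_{X|r_j}$ denotes the given input pmf on $\mathcal X$ of user $j$ at rate $r_j$. Random coding: for each user $j$, rate $r\in\mathcal A_j$ and message $w\in\{1,\dots,\lfloor e^{Nr}\rfloor\}$ there is a codeword in $\mathcal X^N$; all symbols of all codewords are mutually independent, those of user $j$'s rate-$r$ codewords distributed according to its input pmf at rate $r$. The receiver knows all codewords but not the rates. Each user $j$ sends the codeword of an arbitrary $(w_j,r_j)$. For a set $\mathcal T$ of users, $\mathbf r_{\mathcal T}$, $\mathbf w_{\mathcal T}$, $\mathbf X_{\mathcal T}$ are subvectors; $\bar{\mathcal D}$ is the complement of $\mathcal D$. Probabilities are jointly over codebook ensemble and channel. $(\mathcal D,\mathcal R_{\mathcal D})$-decoder: given $\mathcal D$ and a set $\mathcal R_{\mathcal D}$ of rate vectors, a decoder outputting ''collision'' or estimates $(\hat{\mathbf w}_{\mathcal D},\hat{\mathbf r}_{\mathcal D})$, treating users outside $\mathcal D$ as interference. Its system error probability $P_{es}(\mathcal D,\mathcal R_{\mathcal D})$ is the maximum of (i) over $\mathbf w$ and $\mathbf r\in\mathcal R_{\mathcal D}$, $\Pr\{(\hat{\mathbf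 w}_{\mathcal D},\hat{\mathbf r}_{\mathcal D})\ne(\mathbf w_{\mathcal D},\mathbf r_{\mathcal D})\}$ (collision counts as error), and (ii) over $\mathbf w$ and $\mathbf r\notin\mathcal R_{\mathcal D}$, $1-\Pr\{\text{collision}\}-\Pr\{(\hat{\mathbf w}_{\mathcal D},\hat{\mathbf r}_{\mathcal D})=(\mathbf w_{\mathcal D},\mathbf r_{\mathcal D})\}$. Single-user decoder for user $k$ (given a partition $\sigma$): run every $(\mathcal D,\mathcal R_{\mathcal D})$-decoder with $k\in\mathcal D$; output $(\hat w_k,\hat r_k)$ if at least one of them outputs an estimate and all estimates they output for user $k$ coincide; otherwise report a collision for user $k$. Its error probabilities, conditioned on all users' messages $\mathbf w$ and rates $\mathbf r$: for $\mathbf r\in\mathcal R$, $P_e=\Pr\{(\hat w_k,\hat r_k)\ne(w_k,r_k)\}$ (collision counts as error); for $\mathbf r\notin\mathcal R$, $\bar P_c=1-\Pr\{\text{collision}\}-\Pr\{(\hat w_k,\hat r_k)=(w_k,r_k)\}$; $P_{es}=\max\{\max_{\mathbf w,\mathbf r\in\mathcal R}P_e,\max_{\mathbf w,\mathbf r\notin\mathcal R}\bar P_c\}$. Bound $\beta$: with $P(Y|\mathbf X_{\mathcal D},\mathbf r_{\bar{\mathcal D}})=\sum_{\mathbf X_{\bar{\mathcal D}}}\prod_{j\in\bar{\mathcal D}}P_{X|r_j}(X_j)P_{Y|\mathbf X}(Y|\mathbf X)$, and for $\mathcal S\subsetneq\mathcal D$, $E_{m\mathcal D}(\mathcal S,\mathbf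 r,\tilde{\mathbf r})=\max_{0<\rho\le1}\Big\{-\rho\sum_{j\in\mathcal D\setminus\mathcal S}\tilde r_j+\max_{0<s\le1}-\log\sum_Y\sum_{\mathbf X_{\mathcal S}}\prod_{j\in\mathcal S}P_{X|r_j}(X_j)\Big(\sum_{\mathbf X_{\mathcal D\setminus\mathcal S}}\prod_{j\in\mathcal D\setminus\mathcal S}P_{X|r_j}(X_j)P(Y|\mathbf X_{\mathcal D},\mathbf r_{\bar{\mathcal D}})^{1-s}\Big)\Big(\sum_{\mathbf X_{\mathcal D\setminus\mathcal S}}\prod_{j\in\mathcal D\setminus\mathcal S}P_{X|\tilde r_j}(X_j)P(Y|\mathbf X_{\mathcal D},\tilde{\mathbf r}_{\bar{\mathcal D}})^{s/\rho}\Big)^{\rho}\Big\}$, $E_{i\mathcal D}(\mathcal S,\mathbf r,\mathbf r')=\max_{0<\rho\le1}\Big\{-\rho\sum_{j\in\mathcal D\setminus\mathcal S}r_j+\max_{0<s\le1-\rho}-\log\sum_Y\sum_{\mathbf X_{\mathcal S}}\prod_{j\in\mathcal S}P_{X|r_j}(X_j)\Big(\sum_{\mathbf X_{\mathcal D\setminus\mathcal S}}\prod_{j\in\mathcal D\setminus\mathcal S}P_{X|r_j}(X_j)P(Y|\mathbf X_{\mathcal D},\mathbf r_{\bar{\mathcal D}})^{\frac{s}{s+\rho}}\Big)^{s+\rho}\Big(\sum_{\mathbf X_{\mathcal D\setminus\mathcal S}}\prod_{j\in\mathcal D\setminus\mathcal S}P_{X|r'_j}(X_j)P(Y|\mathbf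 X_{\mathcal D},\mathbf r'_{\bar{\mathcal D}})\Big)^{1-s}\Big\}$, define $\beta(\mathcal D,\mathcal R_{\mathcal D})=\max\{A,B\}$ with $A=\max_{\mathbf r\in\mathcal R_{\mathcal D}}\sum_{\mathcal S\subsetneq\mathcal D}[\sum_{\tilde{\mathbf r}\in\mathcal R_{\mathcal D},\tilde{\mathbf r}_{\mathcal S}=\mathbf r_{\mathcal S}}e^{-NE_{m\mathcal D}(\mathcal S,\mathbf r,\tilde{\mathbf r})}+\max_{\mathbf r'\notin\mathcal R_{\mathcal D},\mathbf r'_{\mathcal S}=\mathbf r_{\mathcal S}}e^{-NE_{i\mathcal D}(\mathcal S,\mathbf r,\mathbf r')}]$ and $B=\max_{\tilde{\mathbf r}\notin\mathcal R_{\mathcal D}}\sum_{\mathcal S\subsetneq\mathcal D}\sum_{\mathbf r\in\mathcal R_{\mathcal D},\mathbf r_{\mathcal S}=\tilde{\mathbf r}_{\mathcal S}}\max_{\mathbf r'\notin\mathcal R_{\mathcal D},\mathbf r'_{\mathcal S}=\tilde{\mathbf r}_{\mathcal S}}e^{-NE_{i\mathcal D}(\mathcal S,\mathbf r,\mathbf r')}$; sums and maxima over empty sets are $0$. (For each $(\mathcal D,\mathcal R_{\mathcal D})$ there exists a $(\mathcal D,\mathcal R_{\mathcal D})$-decoder with $P_{es}(\mathcal D,\mathcal R_{\mathcal D})\le\beta(\mathcal D,\mathcal R_{\mathcal D})$.) *)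

From Stdlib Require Import Reals ZArith.
From Stdlib Require Import Classical ClassicalEpsilon.
From mathcomp Require Import all_boot.

Set Implicit Arguments.
Unset Strict Implicit.
Unset Printing Implicit Defensive.

Local Open Scope R_scope.

Definition ind (P : Prop) : R :=
  if excluded_middle_informative P then 1 else 0.

(* real power with the conventions 0^a = 0 for a <> 0 and 0^0 = 1;
   only applied to nonnegative bases *)
Definition rpow (x a : R) : R :=
  if Req_EM_T x 0 then (if Req_EM_T a 0 then 1 else 0) else Rpower x a.

(* extended reals bounded below: [Some x] is the real x, [None] is +oo *)
Definition ext := option R.

(* supremum of a set of extended reals (+oo if +oo belongs to the set
   or the real part is unbounded; all sets used below are nonempty) *)
Definition esup (E : ext -> Prop) : ext :=
  match excluded_middle_informative (E None) with
  | left _ => None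
  | right _ =>
    match excluded_middle_informative
            (bound (fun x => E (Some x)) /\ exists x, E (Some x)) with
    | left H => Some (proj1_sig (completeness _ (proj1 H) (proj2 H)))
    | right _ => None
    end
  end.

(* -log q in the extended reals (q >= 0): -log 0 = +oo *)
Definition neglog (q : R) : ext := if Rlt_dec 0 q then Some (- ln q) else None.

Definition eadd (a : R) (e : ext) : ext := option_map (Rplus a) e.

(* e^{-N E} for an extended real E (e^{-oo} = 0) *)
Definition expneg (N : nat) (E : ext) : R :=
  match E with Some e => exp (- (INR N * e)) | None => 0 end.

(* K users; finite input/output alphabets; for user j a finite type
   [rates j] indexing its rate set A_j, with values [rate_val j];
   input pmfs P_{X|r_j} and channel P_{Y|X}. *)
Record mac := Mac {
  nusers : nat;
  inA : finType;
  outA : finType;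
  rates : 'I_nusers -> finType;
  rate_val : forall j, rates j -> R;
  pin : forall j, rates j -> inA -> R;
  chan : {ffun 'I_nusers -> inA} -> outA -> R
}.

Definition wf_mac (S : mac) : Prop :=
  (forall j (r : @rates S j), 0 < @rate_val S j r) /\
  (forall j, injective (@rate_val S j)) /\
  (forall j (r : @rates S j) x, 0 <= @pin S j r x) /\
  (forall j (r : @rates S j), \big[Rplus/0]_(x : inA S) @pin S j r x = 1) /\
  (forall x y, 0 <= @chan S x y) /\
  (forall x, \big[Rplus/0]_(y : outA S) @chan S x y = 1).

Section System.
Variable S : mac.
Local Notation K := (nusers S).
Local Notation X := (inA S).
Local Notation Y := (outA S).

Definition RV := {dffun forall j : 'I_K, @rates S j}.

(* partial input vectors: z has domain T when z j <> None <-> j \in T;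
   summing over such z is summing over X_T *)
Definition pvec := {ffun 'I_K -> option X}.
Definition has_dom (z : pvec) (T : {set 'I_K}) : Prop :=
  forall j, z j <> None <-> j \in T.
Definition sumX (T : {set 'I_K}) (f : pvec -> R) : R :=
  \big[Rplus/0]_(z : pvec) (ind (has_dom z T) * f z).
Definition wt (T : {set 'I_K}) (r : RV) (z : pvec) : R :=
  \big[Rmult/1]_(j | j \in T)
     match z j with Some x => pin (r j) x | None => 0 end.
Definition merge (z1 z2 : pvec) : pvec :=
  [ffun j => if z1 j is Some x then Some x else z2 j].

(* P(y | X_D = z, r_{\bar D}) *)
Definition Pcond (D : {set 'I_K}) (z : pvec) (r : RV) (y : Y) : R :=
  \big[Rplus/0]_(x : {ffun 'I_K -> X})
     (ind (forall j, j \in D -> z j = Some (x j)) *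
      \big[Rmult/1]_(j | j \notin D) pin (r j) (x j) * @chan S x y).

Definition sumrate (T : {set 'I_K}) (r : RV) : R :=
  \big[Rplus/0]_(j | j \in T) rate_val (r j).

(* the argument of -log in E_{mD} *)
Definition Qm (D Sset : {set 'I_K}) (r rt : RV) (rho s : R) : R :=
  \big[Rplus/0]_(y : Y) sumX Sset (fun zS =>
     wt Sset r zS *
     sumX (D :\: Sset) (fun z =>
        wt (D :\: Sset) r z * rpow (Pcond D (merge zS z) r y) (1 - s)) *
     rpow (sumX (D :\: Sset) (fun z =>
        wt (D :\: Sset) rt z * rpow (Pcond D (merge zS z) rt y) (s / rho))) rho).

(* the argument of -log in E_{iD} *)
Definition Qi (D Sset : {set 'I_K}) (r r' : RV) (rho s : R) : R :=
  \big[Rplus/0]_(y : Y) sumX Sset (fun zS =>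
     wt Sset r zS *
     rpow (sumX (D :\: Sset) (fun z =>
        wt (D :\: Sset) r z * rpow (Pcond D (merge zS z) r y) (s / (s + rho))))
        (s + rho) *
     rpow (sumX (D :\: Sset) (fun z =>
        wt (D :\: Sset) r' z * Pcond D (merge zS z) r' y)) (1 - s)).

(* E_{mD}(S, r, rt) = max_{0<rho<=1} { -rho sum rt + max_{0<s<=1} -log Qm } *)
Definition Em (D Sset : {set 'I_K}) (r rt : RV) : ext :=
  esup (fun v => exists rho s, 0 < rho <= 1 /\ 0 < s <= 1 /\
     v = eadd (- rho * sumrate (D :\: Sset) rt) (neglog (Qm D Sset r rt rho s))).

(* E_{iD}(S, r, r') = max_{0<rho<=1} { -rho sum r + max_{0<s<=1-rho} -log Qi } *)
Definition Ei (D Sset : {set 'I_K}) (r r' : RV) : ext :=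
  esup (fun v => exists rho s, 0 < rho <= 1 /\ 0 < s <= 1 - rho /\
     v = eadd (- rho * sumrate (D :\: Sset) r) (neglog (Qi D Sset r r' rho s))).

Definition agree (T : {set 'I_K}) (r r' : RV) : Prop := forall j, j \in T -> r j = r' j.

Definition beta (N : nat) (D : {set 'I_K}) (RD : {set RV}) : R :=
  let A :=
    \big[Rmax/0]_(r : RV | r \in RD)
      \big[Rplus/0]_(Sset : {set 'I_K} | Sset \proper D)
        (\big[Rplus/0]_(rt : RV | rt \in RD)
            (ind (agree Sset rt r) * expneg N (Em D Sset r rt)) +
         \big[Rmax/0]_(r' : RV | r' \notin RD)
            (ind (agree Sset r' r) * expneg N (Ei D Sset r r'))) in
  let B :=
    \big[Rmax/0]_(rt : RV | rt \notin RD)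
      \big[Rplus/0]_(Sset : {set 'I_K} | Sset \proper D)
        \big[Rplus/0]_(r : RV | r \in RD)
          (ind (agree Sset r rt) *
           \big[Rmax/0]_(r' : RV | r' \notin RD)
              (ind (agree Sset r' rt) * expneg N (Ei D Sset r r'))) in
  Rmax A B.

Variable N : nat.

Definition nmsg (j : 'I_K) (r : @rates S j) : nat :=
  Z.to_nat (Int_part (exp (INR N * rate_val r))).

(* codebook: a codeword in X^N for each user, rate and message *)
Definition CB := {dffun forall j : 'I_K,
   {dffun forall r : @rates S j, {ffun 'I_(nmsg r) -> {ffun 'I_N -> X}}}}.
Definition MV (r : RV) := {dffun forall j : 'I_K, 'I_(nmsg (r j))}.
Definition YN := {ffun 'I_N -> Y}.
Definition MR (j : 'I_K) := {r : @rates S j & 'I_(nmsg r)}.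
Definition Est := forall j : 'I_K, MR j.
(* a decoder: None means "collision" *)
Definition Dec := CB -> YN -> option Est.

Definition pcb (c : CB) : R :=
  \big[Rmult/1]_(j : 'I_K) \big[Rmult/1]_(r : @rates S j)
    \big[Rmult/1]_(w : 'I_(nmsg r)) \big[Rmult/1]_(n : 'I_N) pin r (c j r w n).

Definition pch (r : RV) (w : MV r) (c : CB) (y : YN) : R :=
  \big[Rmult/1]_(n : 'I_N) @chan S [ffun j => c j (r j) (w j) n] (y n).

(* probability of an event, jointly over codebook ensemble and channel,
   when the users send messages w at rates r *)
Definition Pr (r : RV) (w : MV r) (ev : CB -> YN -> Prop) : R :=
  \big[Rplus/0]_(c : CB) \big[Rplus/0]_(y : YN) (pcb c * pch w c y * ind (ev c y)).

Definition truth (r : RV) (w : MV r) (j : 'I_K) : MR j := existT _ (r j) (w j).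

Definition correctD (D : {set 'I_K}) (r : RV) (w : MV r) (e : Est) : Prop :=
  forall j, j \in D -> e j = truth w j.

Definition Pes_D (D : {set 'I_K}) (RD : {set RV}) (dec : Dec) : R :=
  Rmax
    (\big[Rmax/0]_(r : RV | r \in RD) \big[Rmax/0]_(w : MV r)
        Pr w (fun c y => ~ exists e, dec c y = Some e /\ correctD D w e))
    (\big[Rmax/0]_(r : RV | r \notin RD) \big[Rmax/0]_(w : MV r)
        (1 - Pr w (fun c y => dec c y = None)
           - Pr w (fun c y => exists e, dec c y = Some e /\ correctD D w e))).

Definition su_dec (k : 'I_K) (decs : {set 'I_K} -> Dec) :
    CB -> YN -> option (MR k) :=
  fun c y =>
  match excluded_middle_informative
     (exists v : MR k,
        (exists (D : {set 'I_K}) e, k \in D /\ decs D c y = Some e) /\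
        (forall (D : {set 'I_K}) e, k \in D -> decs D c y = Some e -> e k = v)) with
  | left H => Some (proj1_sig (constructive_indefinite_description _ H))
  | right _ => None
  end.

Definition Pes_su (k : 'I_K) (Rop : {set RV}) (sd : CB -> YN -> option (MR k)) : R :=
  Rmax
    (\big[Rmax/0]_(r : RV | r \in Rop) \big[Rmax/0]_(w : MV r)
        Pr w (fun c y => sd c y <> Some (truth w k)))
    (\big[Rmax/0]_(r : RV | r \notin Rop) \big[Rmax/0]_(w : MV r)
        (1 - Pr w (fun c y => sd c y = None)
           - Pr w (fun c y => sd c y = Some (truth w k)))).

End System.

Definition partition_of (S : mac) (k : 'I_(nusers S)) (Rop : {set RV S})
    (RD : {set 'I_(nusers S)} -> {set RV S}) : Prop :=
  (forall r, r \in Rop <-> exists D : {set 'I_(nusers S)}, k \in D /\ r \in RD D) /\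
  (forall D D' : {set 'I_(nusers S)}, k \in D -> k \in D' -> D <> D' -> [disjoint RD D & RD D']).

(* The probability [Pr w ev] is an expectation of the indicator of [ev] with
   respect to the product weight (codebook ensemble) x (channel), whose total
   mass is 1.  From this we get three elementary facts: the union bound,
   a sum of probabilities of pairwise exclusive events is at most 1, and a sum
   of probabilities of covering events is at least 1.

   A (D,R_D)-decoder with error probability P_es(D,R_D) fails on r in R_D with
   probability at most P_es(D,R_D), and outputs a wrong estimate on r outside
   R_D with probability at most P_es(D,R_D).  The single-user decoder outputs
   (w_k,r_k) as soon as some decoder decodes correctly and no decoder outputs a
   wrong estimate, and it can only output a wrong pair when some decoder does;
   the union bound over D then gives the first claim.  The second claim picks
   a partition minimising the sum of the bounds beta (a minimum over a finite
   set) together with decoders achieving beta on its cells. *)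
From Pilot Require Import Defs.
From HB Require Import structures.
From Stdlib Require Import Reals Lra Classical ClassicalEpsilon FunctionalExtensionality.
From mathcomp Require Import all_boot.
(* re-import so that [ind] denotes the indicator of Defs, not Rtopology's *)
Import Defs.
Local Open Scope R_scope.
Set Implicit Arguments. Unset Strict Implicit.

HB.instance Definition _ := Monoid.isComLaw.Build R 0 Rplus
  (fun a b c => esym (Rplus_assoc a b c)) Rplus_comm Rplus_0_l.
HB.instance Definition _ := Monoid.isComLaw.Build R 1 Rmult
  (fun a b c => esym (Rmult_assoc a b c)) Rmult_comm Rmult_1_l.
HB.instance Definition _ := Monoid.isMulLaw.Build R 0 Rmult Rmult_0_l Rmult_0_r.
HB.instance Definition _ :=
  Monoid.isAddLaw.Build R Rmult Rplus Rmult_plus_distr_r Rmult_plus_distr_l.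

Lemma sumR_ge0 (I : finType) (P : pred I) (F : I -> R) :
  (forall i, P i -> 0 <= F i) -> 0 <= \big[Rplus/0]_(i | P i) F i.
Proof. by move=> H; apply: big_ind => //; [lra | move=> *; lra]. Qed.

Lemma sumR_le (I : finType) (P : pred I) (F G : I -> R) :
  (forall i, P i -> F i <= G i) ->
  \big[Rplus/0]_(i | P i) F i <= \big[Rplus/0]_(i | P i) G i.
Proof. by move=> H; apply: big_ind2 => //; [lra | move=> *; lra]. Qed.

Lemma prodR_ge0 (I : finType) (P : pred I) (F : I -> R) :
  (forall i, P i -> 0 <= F i) -> 0 <= \big[Rmult/1]_(i | P i) F i.
Proof. by move=> H; apply: big_ind => //; [lra | move=> *; nra]. Qed.

Lemma sum_dffun_prod (I : finType) (T_ : I -> finType) (F : forall i, T_ i -> R) :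
  \big[Rplus/0]_(g : {dffun forall i, T_ i}) \big[Rmult/1]_(i : I) F i (g i) =
  \big[Rmult/1]_(i : I) \big[Rplus/0]_(t : T_ i) F i t.
Proof.
rewrite (reindex (@dffun_of_fprod I T_)); last exact/onW_bij/dffun_of_fprod_bij.
transitivity (\big[Rplus/0]_(t : fprod T_) \big[Rmult/1]_(i in I) [ffun x => F i x] (t i)).
  by apply: eq_bigr => t _; apply: eq_bigr => i _; rewrite !ffunE.
rewrite big_fprod.
transitivity (\big[Rmult/1]_(i : I)
  \big[Rplus/0]_(j in tagged_with T_ i) untag 0 [ffun x => F i x] j).
  by rewrite bigA_distr_big_dep.
apply: eq_bigr => i _.
by rewrite -(big_tag (fun i t => [ffun x => F i x] t)); apply: eq_bigr => t _; rewrite ffunE.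
Qed.

Lemma bigmax_ge0 (I : finType) (P : pred I) (F : I -> R) :
  0 <= \big[Rmax/0]_(j | P j) F j.
Proof.
elim: (index_enum I) => [|a s IH]; first by rewrite big_nil; lra.
by rewrite big_cons; case: (P a) => //; apply: Rle_trans IH _; apply: Rmax_r.
Qed.

Lemma bigmax_ub (I : finType) (P : pred I) (F : I -> R) i :
  P i -> F i <= \big[Rmax/0]_(j | P j) F j.
Proof.
move: (mem_index_enum i); elim: (index_enum I) => // a s IH.
rewrite in_cons big_cons => /orP [/eqP-> -> | /IH h Pi]; first exact: Rmax_l.
by case: (P a); [apply: Rle_trans (h Pi) _; apply: Rmax_r | apply: h].
Qed.

Lemma bigmax_le (I : finType) (P : pred I) (F : I -> R) c :
  0 <= c -> (forall i, P i -> F i <= c) -> \big[Rmax/0]_(j | P j) F j <= c.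
Proof. by move=> c0 H; apply: (big_ind (fun x => x <= c)) => // x y; apply: Rmax_lub. Qed.

Lemma exists_min (T : finType) (P : T -> Prop) (F : T -> R) x0 :
  P x0 -> exists x, P x /\ forall y, P y -> F x <= F y.
Proof.
move=> Px0.
suff /(_ (enum T)) [|x [Px Hx]] : forall s : seq T, (exists2 x, x \in s & P x) ->
    exists x, P x /\ forall y, y \in s -> P y -> F x <= F y.
- by exists x0; rewrite ?mem_enum.
- by exists x; split => // y; apply: Hx; rewrite mem_enum.
elim => [[x] // | a s IH Hex].
have [/IH [m [Pm Hm]] | hs] := classic (exists2 x, x \in s & P x).
  have [[Pa lt] | nlt] := classic (P a /\ F a < F m).
    exists a; split => // y; rewrite in_cons => /orP [/eqP-> | ys Py]; first lra.
    by have := Hm y ys Py; lra.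
  exists m; split => // y; rewrite in_cons => /orP [/eqP-> Pa | ys]; last exact: Hm.
  by apply: Rnot_lt_le => lt; apply: nlt.
have Pa : P a.
  by case: Hex => x; rewrite in_cons => /orP [/eqP-> // | xs Px]; case: hs; exists x.
exists a; split => // y; rewrite in_cons => /orP [/eqP-> | ys Py]; first lra.
by case: hs; exists y.
Qed.

Lemma ind_T (P : Prop) : P -> ind P = 1.
Proof. by rewrite /ind; case: (excluded_middle_informative P). Qed.

Lemma ind_F (P : Prop) : ~ P -> ind P = 0.
Proof. by rewrite /ind; case: (excluded_middle_informative P). Qed.

Lemma ind_01 (P : Prop) : 0 <= ind P <= 1.
Proof. by rewrite /ind; case: (excluded_middle_informative P) => _ /=; lra. Qed.

Lemma ind_exclusive3 (a b d : Prop) :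
  (a -> ~ b) -> (a -> ~ d) -> (b -> ~ d) -> ind a + ind b + ind d <= 1.
Proof.
move=> hab had hbd; have := ind_01 d.
have [ha | na] := classic a.
  by rewrite (ind_T ha) (ind_F (hab ha)) (ind_F (had ha)); lra.
have [hb | nb] := classic b.
  by rewrite (ind_F na) (ind_T hb) (ind_F (hbd hb)); lra.
by rewrite (ind_F na) (ind_F nb); lra.
Qed.

Lemma ind_cover3 (a b d : Prop) : a \/ b \/ d -> 1 <= ind a + ind b + ind d.
Proof.
have := ind_01 a; have := ind_01 b; have := ind_01 d.
by move=> ? ? ? [h | [h | h]]; rewrite (ind_T h); lra.
Qed.

Section Probability.
Variables (S : mac) (HS : wf_mac S) (N : nat).

(* Both weights are products of pmfs, hence have total mass 1. *)
Lemma pcb_sum : \big[Rplus/0]_(c : CB S N) pcb c = 1.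
Proof.
case: HS => _ [_ [_ [Hpin _]]].
rewrite /pcb (sum_dffun_prod (fun j (cj : {dffun forall r : rates j,
   {ffun 'I_(nmsg N r) -> {ffun 'I_N -> inA S}}}) => \big[Rmult/1]_(r : rates j)
   \big[Rmult/1]_(w : 'I_(nmsg N r)) \big[Rmult/1]_(n : 'I_N) pin r (cj r w n))).
rewrite big1 // => j _.
rewrite (sum_dffun_prod (fun r (f : {ffun 'I_(nmsg N r) -> {ffun 'I_N -> inA S}}) =>
   \big[Rmult/1]_(w : 'I_(nmsg N r)) \big[Rmult/1]_(n : 'I_N) pin r (f w n))).
rewrite big1 // => r _.
rewrite -(bigA_distr_bigA (fun (w : 'I_(nmsg N r)) (g : {ffun 'I_N -> inA S}) =>
   \big[Rmult/1]_(n : 'I_N) pin r (g n))).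
rewrite big1 // => w _.
by rewrite -(bigA_distr_bigA (fun (n : 'I_N) (x : inA S) => pin r x)) big1.
Qed.

Lemma pch_sum (r : RV S) (w : MV N r) (c : CB S N) :
  \big[Rplus/0]_(y : YN S N) pch w c y = 1.
Proof.
case: HS => _ [_ [_ [_ [_ Hchan]]]].
rewrite /pch -(bigA_distr_bigA (fun (n : 'I_N) (y : outA S) =>
   chan [ffun j => c j (r j) (w j) n] y)).
by rewrite big1.
Qed.

Variables (r : RV S) (w : MV N r).
Local Notation event := (CB S N -> YN S N -> Prop).

Lemma weight_ge0 (c : CB S N) (y : YN S N) : 0 <= pcb c * pch w c y.
Proof.
case: HS => _ [_ [Hpin [_ [Hchan _]]]].
apply: Rmult_le_pos; last by apply: prodR_ge0.
by do 4 (apply: prodR_ge0 => ? _).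
Qed.

Lemma Pr_True : Pr w (fun _ _ => True) = 1.
Proof.
rewrite /Pr -pcb_sum; apply: eq_bigr => c _.
rewrite -[RHS]Rmult_1_r -(pch_sum w c) big_distrr /=.
by apply: eq_bigr => y _; rewrite ind_T // Rmult_1_r.
Qed.

(* Pointwise inequalities between sums of indicators integrate. *)
Lemma Pr_sum3_le (a b d : event) :
  (forall c y, ind (a c y) + ind (b c y) + ind (d c y) <= 1) ->
  Pr w a + Pr w b + Pr w d <= 1.
Proof.
move=> H; rewrite -Pr_True /Pr -!big_split /=.
apply: sumR_le => c _; rewrite -!big_split /=; apply: sumR_le => y _.
by have := weight_ge0 c y; have := H c y; rewrite (ind_T (P := True)) //; nra.
Qed.

Lemma Pr_sum3_ge (a b d : event) :
  (forall c y, 1 <= ind (a c y) + ind (b c y) + ind (d c y)) ->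
  1 <= Pr w a + Pr w b + Pr w d.
Proof.
move=> H; rewrite -Pr_True /Pr -!big_split /=.
apply: sumR_le => c _; rewrite -!big_split /=; apply: sumR_le => y _.
by have := weight_ge0 c y; have := H c y; rewrite (ind_T (P := True)) //; nra.
Qed.

Lemma Pr_union (I : finType) (P : pred I) (ev : event) (E : I -> event) :
  (forall c y, ev c y -> exists i, P i /\ E i c y) ->
  Pr w ev <= \big[Rplus/0]_(i | P i) Pr w (E i).
Proof.
move=> H; rewrite /Pr [X in _ <= X]exchange_big /=.
apply: sumR_le => c _; rewrite [X in _ <= X]exchange_big /=; apply: sumR_le => y _.
have w0 := weight_ge0 c y.
have terms_ge0 : forall Q, 0 <= \big[Rplus/0]_(j | Q j) (pcb c * pch w c y * ind (E j c y)).
  by move=> Q; apply: sumR_ge0 => j _; have := ind_01 (E j c y); nra.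
have [h | h] := classic (ev c y); last by rewrite (ind_F h) Rmult_0_r.
have [i [Pi Ei]] := H c y h.
by rewrite (bigD1 i) //= ind_T // ind_T //; have := terms_ge0 (fun j => P j && (j != i)); lra.
Qed.

End Probability.

Section DecoderOutcomes.
Variables (S : mac) (HS : wf_mac S) (N : nat) (D : {set 'I_(nusers S)}).
Variables (RD : {set RV S}) (dec : Dec S N) (r : RV S) (w : MV N r).

Definition decodes (c : CB S N) (y : YN S N) : Prop :=
  exists e, dec c y = Some e /\ correctD D w e.

Definition misdecodes (c : CB S N) (y : YN S N) : Prop :=
  exists e, dec c y = Some e /\ ~ correctD D w e.

Lemma Pes_D_ge0 : 0 <= Pes_D D RD dec.
Proof. by apply: Rle_trans (Rmax_l _ _); apply: bigmax_ge0. Qed.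

Lemma Pr_fail_le_Pes_D : r \in RD -> Pr w (fun c y => ~ decodes c y) <= Pes_D D RD dec.
Proof.
move=> hr; apply: Rle_trans (Rmax_l _ _).
apply: Rle_trans (bigmax_ub (P := fun r => r \in RD) _ hr).
exact: Rle_trans (Rle_refl _) (bigmax_ub _ (isT : xpredT w)).
Qed.

(* Outside R_D, collision, correct and wrong outputs are exclusive, so a
   wrong output costs at most P_es(D,R_D). *)
Lemma Pr_wrong_le_Pes_D : r \notin RD -> Pr w misdecodes <= Pes_D D RD dec.
Proof.
move=> hr; apply: Rle_trans (Rmax_r _ _).
apply: Rle_trans (bigmax_ub (P := fun r => r \notin RD) _ hr).
apply: Rle_trans (bigmax_ub _ (isT : xpredT w)); rewrite -/decodes.
suff : Pr w (fun c y => dec c y = None) + Pr w decodes + Pr w misdecodes <= 1 by lra.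
apply: (Pr_sum3_le HS) => c y; apply: ind_exclusive3.
- by move=> h [e [h' _]]; rewrite h in h'.
- by move=> h [e [h' _]]; rewrite h in h'.
- by move=> [e [h ce]] [e' [h' nce]]; rewrite h in h'; case: h' => <- in nce.
Qed.

End DecoderOutcomes.

Section SingleUser.
Variables (S : mac) (N : nat) (k : 'I_(nusers S)).
Variables (decs : {set 'I_(nusers S)} -> Dec S N) (c : CB S N) (y : YN S N).

Lemma su_decP (v : MR N k) :
  su_dec k decs c y = Some v <->
  (exists (D : {set 'I_(nusers S)}) e, k \in D /\ decs D c y = Some e) /\
  (forall (D : {set 'I_(nusers S)}) e, k \in D -> decs D c y = Some e -> e k = v).
Proof.
rewrite /su_dec; case: excluded_middle_informative => [H | H]; last first.
  by split => // hv; case: H; exists v.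
case: (constructive_indefinite_description _ H) => v' /= [[D [e [kD he]]] Hv'].
split; first by case=> <-; split; [exists D, e | ].
by case=> _ Hv; rewrite -(Hv' D e kD he) (Hv D e kD he).
Qed.

Lemma su_dec_wrong (r : RV S) (w : MV N r) (v : MR N k) :
  su_dec k decs c y = Some v -> v <> truth w k ->
  exists D : {set 'I_(nusers S)}, k \in D /\ misdecodes D (decs D) w c y.
Proof.
case/su_decP=> [[D [e [kD he]]] Hv] nv; exists D; split => //.
by exists e; split => // ce; apply: nv; rewrite -(Hv D e kD he); apply: ce.
Qed.

Lemma su_dec_error_event (RD : {set 'I_(nusers S)} -> {set RV S}) (r : RV S)
    (w : MV N r) (D0 : {set 'I_(nusers S)}) :
  k \in D0 -> r \in RD D0 -> su_dec k decs c y <> Some (truth w k) ->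
  exists D : {set 'I_(nusers S)}, k \in D /\ (if r \in RD D then ~ decodes D (decs D) w c y
                       else misdecodes D (decs D) w c y).
Proof.
move=> kD0 hr0 herr; apply: NNPP => Hgood; apply: herr.
have ok : forall D : {set 'I_(nusers S)}, k \in D -> ~ (if r \in RD D then ~ decodes D (decs D) w c y
                                  else misdecodes D (decs D) w c y).
  by move=> D kD hb; apply: Hgood; exists D.
have := ok D0 kD0; rewrite hr0 => /NNPP [e0 [he0 _]].
apply/su_decP; split; first by exists D0, e0.
move=> D e kD he; have := ok D kD; case: (r \in RD D).
  by move=> /NNPP [e' [he' ce']]; rewrite he in he'; case: he' => ->; apply: ce'.
by move=> nb; apply: NNPP => ne; apply: nb; exists e; split => // ce; apply/ne/ce.
Qed.

End SingleUser.

Lemma Pes_su_union_bound (S : mac) (HS : wf_mac S) (N : nat) (k : 'I_(nusers S))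
    (Rop : {set RV S}) (RD : {set 'I_(nusers S)} -> {set RV S})
    (decs : {set 'I_(nusers S)} -> Dec S N) :
  partition_of k Rop RD ->
  Pes_su Rop (su_dec k decs) <=
    \big[Rplus/0]_(D : {set 'I_(nusers S)} | k \in D) Pes_D D (RD D) (decs D).
Proof.
move=> [Hcover _].
set Sum := \big[Rplus/0]_(D : {set 'I_(nusers S)} | k \in D) _.
have Sum0 : 0 <= Sum by apply: sumR_ge0 => D _; apply: Pes_D_ge0.
apply: Rmax_lub; apply: bigmax_le => // r hr; apply: bigmax_le => // w _.
  have [D0 [kD0 hr0]] := proj1 (Hcover r) hr.
  apply: Rle_trans (Pr_union HS w (fun c y => su_dec_error_event (c := c) (y := y) kD0 hr0)) _.
  apply: sumR_le => D kD; case: (boolP (r \in RD D)) => hD.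
  - exact: Pr_fail_le_Pes_D.
  - exact: (Pr_wrong_le_Pes_D HS).
have out : forall D : {set 'I_(nusers S)}, k \in D -> r \notin RD D.
  by move=> D kD; apply/negP => h; move/negP: hr; apply; apply/Hcover; exists D.
pose wrong c y := exists v, su_dec k decs c y = Some v /\ v <> truth w k.
have cover : 1 <= Pr w (fun c y => su_dec k decs c y = None)
                  + Pr w (fun c y => su_dec k decs c y = Some (truth w k)) + Pr w wrong.
  apply: (Pr_sum3_ge HS) => c y; apply: ind_cover3; rewrite /wrong.
  case: (su_dec k decs c y) => [v|]; last by left.
  by have [->|nv] := classic (v = truth w k); [right; left | right; right; exists v].
have union : Pr w wrong <= Sum.
  apply: Rle_trans (Pr_union HS w (E := fun D => misdecodes D (decs D) w) _) _.
    by move=> c y [v [hv nv]]; apply: su_dec_wrong hv nv.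
  by apply: sumR_le => D kD; apply: (Pr_wrong_le_Pes_D HS); apply: out.
lra.
Qed.

(* Every operation region admits a partition: put it all in the cell {k}. *)
Lemma partition_singleton (S : mac) (k : 'I_(nusers S)) (Rop : {set RV S}) :
  partition_of k Rop (fun D => if D == [set k] then Rop else set0).
Proof.
split.
  move=> r; split; first by move=> hr; exists [set k]; rewrite eqxx set11.
  by case=> D [_]; case: eqP => // _; rewrite in_set0.
move=> D D' _ _ ne; apply/pred0P => x /=.
case: eqP => [eD|_]; case: eqP => [eD'|_]; rewrite ?in_set0 ?andbF //.
by case: ne; rewrite eD eD'.
Qed.

(* Partitions can be tabulated as finite functions, over which we minimise. *)
Lemma partition_of_ffun (S : mac) (k : 'I_(nusers S)) (Rop : {set RV S})
    (RD : {set 'I_(nusers S)} -> {set RV S}) :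
  partition_of k Rop RD -> partition_of k Rop [ffun D => RD D].
Proof.
suff -> : fun_of_fin [ffun D => RD D] = RD by [].
by apply: functional_extensionality => D; rewrite ffunE.
Qed.

Theorem theorem3 (S : mac) (HS : wf_mac S) (N : nat) (k : 'I_(nusers S))
    (Rop : {set RV S}) :
  (* union bound for the single-user decoder built from any decoders *)
  (forall (RD : {set 'I_(nusers S)} -> {set RV S})
          (decs : {set 'I_(nusers S)} -> Dec S N),
     partition_of k Rop RD ->
     Pes_su Rop (su_dec k decs) <=
       \big[Rplus/0]_(D : {set 'I_(nusers S)} | k \in D) Pes_D D (RD D) (decs D))
  /\
  (* consequence, given the achievability of beta by (D,R_D)-decoders *)
  ((forall (D : {set 'I_(nusers S)}) (RD : {set RV S}),
      k \in D -> exists dec : Dec S N, Pes_D D RD dec <= beta N D RD) ->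
   exists (RD0 : {set 'I_(nusers S)} -> {set RV S})
          (decs : {set 'I_(nusers S)} -> Dec S N),
     partition_of k Rop RD0 /\
     forall RD : {set 'I_(nusers S)} -> {set RV S},
       partition_of k Rop RD ->
       Pes_su Rop (su_dec k decs) <=
         \big[Rplus/0]_(D : {set 'I_(nusers S)} | k \in D) beta N D (RD D)).
Proof.
split=> [RD decs | achieve]; first exact: Pes_su_union_bound.
pose sigma := {ffun {set 'I_(nusers S)} -> {set RV S}}.
pose bound (RD : {set 'I_(nusers S)} -> {set RV S}) :=
  \big[Rplus/0]_(D : {set 'I_(nusers S)} | k \in D) beta N D (RD D).
have [m [Pm m_min]] := @exists_min sigma (fun f => partition_of k Rop f)
  (fun f => bound f) [ffun D => if D == [set k] then Rop else set0]
  (partition_of_ffun (partition_singleton k Rop)).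
have [decs Hdecs] : exists decs : {set 'I_(nusers S)} -> Dec S N,
    forall D : {set 'I_(nusers S)}, k \in D -> Pes_D D (m D) (decs D) <= beta N D (m D).
  apply: (choice (fun (D : {set 'I_(nusers S)}) (dec : Dec S N) => k \in D -> Pes_D D (m D) dec <= beta N D (m D))) => D.
  have [kD | nkD] := boolP (k \in D); last by exists (fun _ _ => None).
  by have [dec Hdec] := achieve D (m D) kD; exists dec.
exists m, decs; split=> // RD HRD.
apply: Rle_trans (Pes_su_union_bound HS decs Pm) _.
apply: Rle_trans (sumR_le Hdecs) _.
have /m_min := partition_of_ffun HRD.
by rewrite /bound; under [X in _ <= X -> _]eq_bigr do rewrite ffunE.
Qed.
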